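(* Fix $g\ge1$ and $0\le g'<g$, $g''=g-g'$. Equip $\mathbb{P}_{g'}\backslash\mathfrak{S}_g$ with the Weil–Petersson metric $g_{WP}$ and $A_{g'}\times\mathcal{T}^{>0}_{g''}$ with the product metric $g'_{WP}+g''_{trWP}$. Then the projection $\pi_{g'}:\mathbb{P}_{g'}\backslash\mathfrak{S}_g\to A_{g'}\times\mathcal{T}^{>0}_{g''}$ is a Riemannian submersion; in particular it is $1$-Lipschitz.
   Context: $\mathfrak{S}_g=\{\tau\in\mathrm{Sym}(g,\mathbb{C}):\operatorname{Im}\tau>0\}$, $\tau=X+iY$, with $\mathrm{Sp}(2g,\mathbb{R})$ acting by $\begin{pmatrix}A&B\\C&D\end{pmatrix}\cdot\tau=(A\tau+B)(C\tau+D)^{-1}$; $\Gamma=\mathrm{Sp}(2g,\mathbb{Z})/\{\pm1\}$. The Weil–Petersson metric $g_{WP}$ is the invariant metric with $\|V\|_\tau^2=\frac12\big(\operatorname{tr}(Y^{-1}V_XY^{-1}V_X)+\operatorname{tr}(Y^{-1}V_YY^{-1}V_Y)\big)$ for $V=V_X+iV_Y\in\mathrm{Sym}(g,\mathbb{C})\cong T_\tau\mathfrak{S}_g$ (Kähler form $\frac{i}{4}\operatorname{tr}(Y^{-1}d\tau Y^{-1}d\bar\tau)$); $g'_{WP}$ is the same metric on $\mathfrak{S}_{g'}$ and on $A_{g'}=\mathrm{Sp}(2g',\mathbb{Z})\backslash\mathfrak{S}_{g'}$. Block decomposition $\tau=\begin{pmatrix}\tau'&\tau'''\\{}^t\tau'''&\tau''\end{pmatrix}$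 with $\tau'$ of size $g'\times g'$, similarly for $X,Y$. $P_{g'}\subset\mathrm{Sp}(2g,\mathbb{R})$ is the parabolic subgroup of matrices $\begin{pmatrix}A'&0&B'&*\\ *&u&*&*\\ C'&0&D'&*\\0&0&0&(u^t)^{-1}\end{pmatrix}$ with $\begin{pmatrix}A'&B'\\C'&D'\end{pmatrix}\in\mathrm{Sp}(2g',\mathbb{R})$, $u\in\mathrm{GL}(g'',\mathbb{R})$ (the normalizer of the flag $\langle e_{g'+1},\dots,e_g\rangle\subset\langle e_{g'+1},\dots,e_g\rangle^\perp$), and $\mathbb{P}_{g'}=\Gamma\cap P_{g'}$. The map $\pi_{g'}(\tau)=(\tau',\,Y''-{}^tY'''(Y')^{-1}Y''')$ from $\mathfrak{S}_g$ to $\mathfrak{S}_{g'}\times\mathrm{Sym}^+(g'',\mathbb{R})$ induces the projection $\mathbb{P}_{g'}\backslash\mathfrak{S}_g\to A_{g'}\times\mathcal{T}^{>0}_{g''}$, where $\mathcal{T}^{>0}_{g''}=\mathrm{GL}(g'',\mathbb{Z})\backslash\mathrm{Sym}^+(g'',\mathbb{R})$ (action $t\mapsto ata^t$) with metric $g''_{trWP}=\frac12\operatorname{tr}(t^{-1}dt\,t^{-1}dt)$. *)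

From HB Require Import structures.
From mathcomp Require Import all_boot all_order all_algebra.
From mathcomp Require Import all_classical all_reals all_analysis.
Set Implicit Arguments. Unset Strict Implicit. Unset Printing Implicit Defensive.
Import Order.TTheory GRing.Theory Num.Theory.
Import numFieldNormedType.Exports.
Local Open Scope ring_scope.

Section Defs.
Variable R : realType.

Definition symmx (n : nat) (A : 'M[R]_n) : Prop := A^T = A.

Definition posdefmx (n : nat) (A : 'M[R]_n) : Prop :=
  symmx A /\ forall v : 'cV[R]_n, v != 0 -> 0 < (v^T *m A *m v) 0 0.

(* tau = X + i Y lies in the Siegel upper half space S_n *)
Definition siegel (n : nat) (X Y : 'M[R]_n) : Prop := symmx X /\ posdefmx Y.

Variables g' g'' : nat.

(* second component of pi_{g'}: Y'' - ^tY''' (Y')^{-1} Y''' ;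
   Y' = ulsubmx Y (g' x g'), Y''' = ursubmx Y (g' x g''), Y'' = drsubmx Y *)
Definition pi2 (Y : 'M[R]_(g' + g'')) : 'M[R]_g'' :=
  drsubmx Y - (ursubmx Y)^T *m invmx (ulsubmx Y) *m ursubmx Y.

(* pi_{g'}(tau) = (tau', pi2 Y), with tau' = X' + i Y' recorded as (X', Y') *)
Definition pi_X (X Y : 'M[R]_(g' + g'')) : 'M[R]_g' := ulsubmx X.
Definition pi_Y (X Y : 'M[R]_(g' + g'')) : 'M[R]_g' := ulsubmx Y.
Definition pi_T (X Y : 'M[R]_(g' + g'')) : 'M[R]_g'' := pi2 Y.

Definition curveX (X VX : 'M[R]_(g' + g'')) (t : R) := X + t *: VX.

Definition dpi_derivable (X Y VX VY : 'M[R]_(g' + g'')) : Prop :=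
  [/\ derivable (fun t : R => pi_X (curveX X VX t) (curveX Y VY t)) 0 1,
      derivable (fun t : R => pi_Y (curveX X VX t) (curveX Y VY t)) 0 1 &
      derivable (fun t : R => pi_T (curveX X VX t) (curveX Y VY t)) 0 1].

Definition dpi_X (X Y VX VY : 'M[R]_(g' + g'')) : 'M[R]_g' :=
  derive1 (fun t : R => pi_X (curveX X VX t) (curveX Y VY t)) 0.
Definition dpi_Y (X Y VX VY : 'M[R]_(g' + g'')) : 'M[R]_g' :=
  derive1 (fun t : R => pi_Y (curveX X VX t) (curveX Y VY t)) 0.
Definition dpi_T (X Y VX VY : 'M[R]_(g' + g'')) : 'M[R]_g'' :=
  derive1 (fun t : R => pi_T (curveX X VX t) (curveX Y VY t)) 0.

End Defs.

(* Weil-Petersson inner product at tau = X + iY on S_n, polarization of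
   ||V||^2 = 1/2 (tr(Y^-1 V_X Y^-1 V_X) + tr(Y^-1 V_Y Y^-1 V_Y)) *)
Definition wp_inner (R : realType) (n : nat) (Y VX VY WX WY : 'M[R]_n) : R :=
  2^-1 * (\tr (invmx Y *m VX *m invmx Y *m WX) + \tr (invmx Y *m VY *m invmx Y *m WY)).

Definition trwp_inner (R : realType) (n : nat) (T A B : 'M[R]_n) : R :=
  2^-1 * \tr (invmx T *m A *m invmx T *m B).

Definition dpi_sqnorm (R : realType) (g' g'' : nat) (X Y VX VY : 'M[R]_(g' + g'')) : R :=
  wp_inner (ulsubmx Y) (dpi_X X Y VX VY) (dpi_Y X Y VX VY)
                       (dpi_X X Y VX VY) (dpi_Y X Y VX VY)
  + trwp_inner (pi2 Y) (dpi_T X Y VX VY) (dpi_T X Y VX VY).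

(* pi_{g'} is a Riemannian submersion at tau = X + iY:
   differentiable, with surjective differential onto
   T(S_{g'} x Sym^+(g'')) = Sym(g',C) x Sym(g'',R), which is isometric on the
   g_WP-orthogonal complement (horizontal space) of its kernel.
   The last conjunct (contraction of all tangent vectors) is the infinitesimal
   form of the 1-Lipschitz property. *)
Definition pi_riemannian_submersion_at (R : realType) (g' g'' : nat)
  (X Y : 'M[R]_(g' + g'')) : Prop :=
  [/\ (forall VX VY : 'M[R]_(g' + g''), symmx VX -> symmx VY ->
         dpi_derivable X Y VX VY),
      (forall (WX WY : 'M[R]_g') (WT : 'M[R]_g''),
         symmx WX -> symmx WY -> symmx WT ->
         exists VX VY : 'M[R]_(g' + g''), [/\ symmx VX, symmx VY,
           dpi_X X Y VX VY = WX, dpi_Y X Y VX VY = WY & dpi_T X Y VX VY = WT]),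
      (forall VX VY : 'M[R]_(g' + g''), symmx VX -> symmx VY ->
         (forall WX WY : 'M[R]_(g' + g''), symmx WX -> symmx WY ->
            dpi_X X Y WX WY = 0 -> dpi_Y X Y WX WY = 0 -> dpi_T X Y WX WY = 0 ->
            wp_inner Y VX VY WX WY = 0) ->
         dpi_sqnorm X Y VX VY = wp_inner Y VX VY VX VY) &
      (forall VX VY : 'M[R]_(g' + g''), symmx VX -> symmx VY ->
         dpi_sqnorm X Y VX VY <= wp_inner Y VX VY VX VY)].

From HB Require Import structures.
From mathcomp Require Import all_boot all_order all_algebra.
From mathcomp Require Import all_classical all_reals all_analysis.
Set Implicit Arguments. Unset Strict Implicit. Unset Printing Implicit Defensive.
Import Order.TTheory GRing.Theory Num.Theory.
Import numFieldNormedType.Exports.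
Local Open Scope ring_scope.

(* Write Y = L diag(Y', S) ^tL with L block lower unitriangular and
   S = Y'' - ^tY''' Y'^-1 Y''' the Schur complement, so that the second
   component of pi is Y |-> S.  Conjugating tangent vectors by L^-1 turns the
   Weil-Petersson form at Y into the block diagonal form with weights Y'^-1
   and S^-1, and in these coordinates d pi reads off the upper-left blocks of
   V_X and V_Y and the lower-right block of L^-1 V_Y ^tL^-1.  Hence |V|^2 is
   |d pi V|^2 plus the pairing of V with an explicit vertical vector; that
   pairing vanishes for horizontal V, and it is a sum of traces
   tr(P N Q ^tN) with P, Q positive definite, hence nonnegative. *)

Section BlockLDL.
Variables (R : comUnitRingType) (p q : nat).
Implicit Types (Y V W U : 'M[R]_(p + q)) (K : 'M[R]_(q, p)).

Lemma ulsubmx_line (M N : 'M[R]_(p + q)) (t : R) :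
  ulsubmx (M + t *: N) = ulsubmx M + t *: ulsubmx N.
Proof. by apply/matrixP => i j; rewrite !mxE. Qed.

Lemma ursubmx_line (M N : 'M[R]_(p + q)) (t : R) :
  ursubmx (M + t *: N) = ursubmx M + t *: ursubmx N.
Proof. by apply/matrixP => i j; rewrite !mxE. Qed.

Lemma drsubmx_line (M N : 'M[R]_(p + q)) (t : R) :
  drsubmx (M + t *: N) = drsubmx M + t *: drsubmx N.
Proof. by apply/matrixP => i j; rewrite !mxE. Qed.

Lemma trmx_sym_blocks Y : Y^T = Y ->
  [/\ (ulsubmx Y)^T = ulsubmx Y, (drsubmx Y)^T = drsubmx Y & dlsubmx Y = (ursubmx Y)^T].
Proof. by move=> symY; rewrite trmx_ulsub trmx_drsub trmx_ursub symY. Qed.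

Definition unilow_mx K : 'M[R]_(p + q) := block_mx 1%:M 0 K 1%:M.

Lemma mul_unilow_mx K K' : unilow_mx K *m unilow_mx K' = unilow_mx (K + K').
Proof.
by rewrite mulmx_block !mulmx0 !mul0mx !mul1mx !mulmx1 !addr0 add0r addrC.
Qed.

Lemma unilow_mxNK K : unilow_mx K *m unilow_mx (- K) = 1%:M.
Proof. by rewrite mul_unilow_mx subrr [RHS]scalar_mx_block. Qed.

Lemma unilow_mxKN K : unilow_mx (- K) *m unilow_mx K = 1%:M.
Proof. by rewrite mul_unilow_mx addNr [RHS]scalar_mx_block. Qed.

Lemma unilow_mx_unit K : unilow_mx K \in unitmx.
Proof. by case: (mulmx1_unit (unilow_mxNK K)). Qed.

Lemma unilowN_sandwich K V :
  unilow_mx (- K) *m V *m (unilow_mx (- K))^T =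
  block_mx (ulsubmx V) (ursubmx V - ulsubmx V *m K^T) (dlsubmx V - K *m ulsubmx V)
    (drsubmx V - dlsubmx V *m K^T - K *m ursubmx V + K *m ulsubmx V *m K^T).
Proof.
rewrite /unilow_mx -[in LHS](submxK V) tr_block_mx !trmx1 !trmx0 linearN /=.
rewrite !mulmx_block !mulmx0 !mul0mx !mul1mx !mulmx1 !addr0.
congr block_mx; rewrite ?mulmxN ?mulNmx addrC //.
by rewrite mulmxDl mulNmx opprD opprK !addrA [LHS](ACl (2*4*1*3)).
Qed.

Definition schur Y : 'M[R]_q :=
  drsubmx Y - (ursubmx Y)^T *m invmx (ulsubmx Y) *m ursubmx Y.

Definition ldl_mx Y : 'M[R]_(q, p) := (ursubmx Y)^T *m invmx (ulsubmx Y).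

Definition ldl_lift Y U := unilow_mx (ldl_mx Y) *m U *m (unilow_mx (ldl_mx Y))^T.

Definition ldl_conj Y V := unilow_mx (- ldl_mx Y) *m V *m (unilow_mx (- ldl_mx Y))^T.

Lemma ldl_liftK Y : cancel (ldl_lift Y) (ldl_conj Y).
Proof.
move=> U; rewrite /ldl_conj /ldl_lift !mulmxA unilow_mxKN mul1mx.
by rewrite -mulmxA -trmx_mul unilow_mxKN trmx1 mulmx1.
Qed.

Lemma ldl_conjK Y : cancel (ldl_conj Y) (ldl_lift Y).
Proof.
move=> V; rewrite /ldl_conj /ldl_lift !mulmxA unilow_mxNK mul1mx.
by rewrite -mulmxA -trmx_mul unilow_mxNK trmx1 mulmx1.
Qed.

Lemma ldl_lift_sym Y U : U^T = U -> (ldl_lift Y U)^T = ldl_lift Y U.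
Proof. by rewrite /ldl_lift !trmx_mul trmxK => ->; rewrite mulmxA. Qed.

Lemma ldl_conj_sym Y V : V^T = V -> (ldl_conj Y V)^T = ldl_conj Y V.
Proof. by rewrite /ldl_conj !trmx_mul trmxK => ->; rewrite mulmxA. Qed.

Lemma ldl_conj_ul Y V : ulsubmx (ldl_conj Y V) = ulsubmx V.
Proof. by rewrite /ldl_conj unilowN_sandwich block_mxKul. Qed.

Lemma ldl_conj_dr Y V : drsubmx (ldl_conj Y V) =
  drsubmx V - dlsubmx V *m (ldl_mx Y)^T - ldl_mx Y *m ursubmx V
  + ldl_mx Y *m ulsubmx V *m (ldl_mx Y)^T.
Proof. by rewrite /ldl_conj unilowN_sandwich block_mxKdr. Qed.

Lemma ldl_lift_ul Y U : ulsubmx (ldl_lift Y U) = ulsubmx U.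
Proof. by rewrite -[in RHS](ldl_liftK Y U) ldl_conj_ul. Qed.

Section Symmetric.
Variable Y : 'M[R]_(p + q).
Hypotheses (symY : Y^T = Y) (unitA : ulsubmx Y \in unitmx).

Lemma trmx_ldl_mx : (ldl_mx Y)^T = invmx (ulsubmx Y) *m ursubmx Y.
Proof.
have [symA _ _] := trmx_sym_blocks symY.
by rewrite trmx_mul trmx_inv symA trmxK.
Qed.

Lemma ldl_conj_diag : ldl_conj Y Y = block_mx (ulsubmx Y) 0 0 (schur Y).
Proof.
have [_ _ dlY] := trmx_sym_blocks symY.
rewrite /ldl_conj unilowN_sandwich trmx_ldl_mx /ldl_mx dlY.
by rewrite !mulmxA mulmxKV // mulmxV // mul1mx !subrr subrK.
Qed.

Lemma ldl_decomposition : Y = ldl_lift Y (block_mx (ulsubmx Y) 0 0 (schur Y)).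
Proof. by rewrite -ldl_conj_diag ldl_conjK. Qed.

Hypothesis unitS : schur Y \in unitmx.

Lemma invmx_ldl : invmx Y =
  (unilow_mx (- ldl_mx Y))^T *m block_mx (invmx (ulsubmx Y)) 0 0 (invmx (schur Y))
    *m unilow_mx (- ldl_mx Y).
Proof.
set Z := (X in _ = X).
have YZ : Y *m Z = 1%:M.
  rewrite {1}ldl_decomposition /ldl_lift /Z -!mulmxA [X in _ *m (_ *m X)]mulmxA.
  rewrite -trmx_mul unilow_mxKN trmx1 mul1mx [X in _ *m X]mulmxA mulmx_block.
  rewrite !mulmx0 !mul0mx !addr0 !add0r !mulmxV // -scalar_mx_block mul1mx.
  exact: unilow_mxNK.
have [unitY _] := mulmx1_unit YZ.
by rewrite -[Z](mulKmx unitY) YZ mulmx1.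
Qed.

Lemma mxtrace_ldl V W :
  \tr (invmx Y *m V *m invmx Y *m W) =
  \tr (block_mx (invmx (ulsubmx Y)) 0 0 (invmx (schur Y)) *m ldl_conj Y V *m
       block_mx (invmx (ulsubmx Y)) 0 0 (invmx (schur Y)) *m ldl_conj Y W).
Proof.
by rewrite invmx_ldl /ldl_conj -!mulmxA [LHS]mxtrace_mulC !mulmxA.
Qed.

End Symmetric.
End BlockLDL.

Lemma mxtrace_block_diag (R : comRingType) p q (Ai : 'M[R]_p) (Si : 'M[R]_q)
    (U W : 'M[R]_(p + q)) :
  \tr (block_mx Ai 0 0 Si *m U *m block_mx Ai 0 0 Si *m W) =
  \tr (Ai *m ulsubmx U *m Ai *m ulsubmx W) + \tr (Ai *m ursubmx U *m Si *m dlsubmx W)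
  + \tr (Si *m dlsubmx U *m Ai *m ursubmx W) + \tr (Si *m drsubmx U *m Si *m drsubmx W).
Proof.
rewrite -[in LHS](submxK U) -[in LHS](submxK W) !mulmx_block.
rewrite !mulmx0 !mul0mx !addr0 !add0r mxtrace_block !mxtraceD.
by rewrite ?mulmxA addrA.
Qed.

Section TraceForm.
Variables (R : comUnitRingType) (p q : nat).
Implicit Types (Y V W : 'M[R]_(p + q)).

Definition tr_form Y V W := \tr (invmx Y *m V *m invmx Y *m W).

(* In the coordinates [ldl_conj Y], d pi only sees the upper-left block of
   V_X, and the upper-left and lower-right blocks of V_Y: the vertical parts
   of V_X and V_Y are what remains. *)
Definition vert_X Y V : 'M[R]_(p + q) :=
  ldl_lift Y (block_mx 0 (ursubmx (ldl_conj Y V)) (dlsubmx (ldl_conj Y V))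
                         (drsubmx (ldl_conj Y V))).

Definition vert_Y Y V : 'M[R]_(p + q) :=
  ldl_lift Y (block_mx 0 (ursubmx (ldl_conj Y V)) (dlsubmx (ldl_conj Y V)) 0).

Lemma vert_X_ul Y V : ulsubmx (vert_X Y V) = 0.
Proof. by rewrite ldl_lift_ul block_mxKul. Qed.

Lemma vert_Y_ul Y V : ulsubmx (vert_Y Y V) = 0.
Proof. by rewrite ldl_lift_ul block_mxKul. Qed.

Lemma vert_Y_dr Y V : drsubmx (ldl_conj Y (vert_Y Y V)) = 0.
Proof. by rewrite ldl_liftK block_mxKdr. Qed.

Lemma vert_X_sym Y V : V^T = V -> (vert_X Y V)^T = vert_X Y V.
Proof.
move=> /(ldl_conj_sym Y) /trmx_sym_blocks [_ symD dlV]; apply: ldl_lift_sym.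
by rewrite tr_block_mx trmx0 symD dlV trmxK.
Qed.

Lemma vert_Y_sym Y V : V^T = V -> (vert_Y Y V)^T = vert_Y Y V.
Proof.
move=> /(ldl_conj_sym Y) /trmx_sym_blocks [_ _ dlV]; apply: ldl_lift_sym.
by rewrite tr_block_mx !trmx0 dlV trmxK.
Qed.

Section Symmetric.
Variable Y : 'M[R]_(p + q).
Hypotheses (symY : Y^T = Y) (unitA : ulsubmx Y \in unitmx)
           (unitS : schur Y \in unitmx).
Local Notation Ai := (invmx (ulsubmx Y)).
Local Notation Si := (invmx (schur Y)).

Lemma tr_form_blocks V W : tr_form Y V W =
  \tr (Ai *m ulsubmx (ldl_conj Y V) *m Ai *m ulsubmx (ldl_conj Y W))
  + \tr (Ai *m ursubmx (ldl_conj Y V) *m Si *m dlsubmx (ldl_conj Y W))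
  + \tr (Si *m dlsubmx (ldl_conj Y V) *m Ai *m ursubmx (ldl_conj Y W))
  + \tr (Si *m drsubmx (ldl_conj Y V) *m Si *m drsubmx (ldl_conj Y W)).
Proof. by rewrite /tr_form mxtrace_ldl // mxtrace_block_diag. Qed.

Lemma tr_form_vert_X V : tr_form Y V V =
  \tr (Ai *m ulsubmx V *m Ai *m ulsubmx V) + tr_form Y V (vert_X Y V).
Proof.
rewrite !tr_form_blocks /vert_X ldl_liftK.
rewrite block_mxKul block_mxKur block_mxKdl block_mxKdr mulmx0 mxtrace0 add0r.
by rewrite ldl_conj_ul !addrA.
Qed.

Lemma tr_form_vert_Y V : tr_form Y V V =
  \tr (Ai *m ulsubmx V *m Ai *m ulsubmx V)
  + \tr (Si *m drsubmx (ldl_conj Y V) *m Si *m drsubmx (ldl_conj Y V))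
  + tr_form Y V (vert_Y Y V).
Proof.
rewrite !tr_form_blocks /vert_Y ldl_liftK.
rewrite block_mxKul block_mxKur block_mxKdl block_mxKdr !mulmx0 !mxtrace0 add0r addr0.
by rewrite ldl_conj_ul [LHS](ACl (1*4*(2*3))).
Qed.

End Symmetric.
End TraceForm.

Section PositiveDefinite.
Variable R : realType.

Lemma posdefmx_psd n (A : 'M[R]_n) (v : 'cV_n) : posdefmx A -> 0 <= (v^T *m A *m v) 0 0.
Proof.
case=> _ posA; have [->|v_neq0] := eqVneq v 0; first by rewrite mulmx0 mxE.
exact/ltW/posA.
Qed.

Lemma posdefmx_unit n (A : 'M[R]_n) : posdefmx A -> A \in unitmx.
Proof.
case=> _ posA; rewrite unitmxE unitfE; apply/negP => /det0P [v v_neq0 vA].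
have vT_neq0 : v^T != 0 by rewrite -(inj_eq (@trmx_inj _ _ _)) trmxK trmx0.
by have := posA _ vT_neq0; rewrite trmxK vA mul0mx mxE ltxx.
Qed.

Lemma posdefmx_congr n (A M : 'M[R]_n) : posdefmx A -> M \in unitmx ->
  posdefmx (M *m A *m M^T).
Proof.
case=> symA posA unitM; split.
  by rewrite /symmx !trmx_mul trmxK symA mulmxA.
move=> v v_neq0; have Mv_neq0 : M^T *m v != 0.
  apply: contra v_neq0 => /eqP Mv0.
  by rewrite -(mulKmx (_ : M^T \in unitmx) v) ?Mv0 ?mulmx0 ?unitmx_tr.
by have := posA _ Mv_neq0; rewrite trmx_mul trmxK !mulmxA.
Qed.

Lemma posdefmx_inv n (A : 'M[R]_n) : posdefmx A -> posdefmx (invmx A).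
Proof.
move=> posA; have [symA _] := posA.
have -> : invmx A = invmx A *m A *m (invmx A)^T.
  by rewrite trmx_inv symA -mulmxA mulKmx ?posdefmx_unit.
by apply: posdefmx_congr; rewrite // unitmx_inv posdefmx_unit.
Qed.

Lemma posdefmx_ulsub p q (Y : 'M[R]_(p + q)) : posdefmx Y -> posdefmx (ulsubmx Y).
Proof.
case=> symY posY; split; first by case: (trmx_sym_blocks symY).
move=> v v_neq0; have w_neq0 : col_mx v (0 : 'cV_q) != 0.
  by apply: contra v_neq0 => /eqP; rewrite -col_mx0 => /eq_col_mx [-> _].
have := posY _ w_neq0; rewrite -[in X in X -> _](submxK Y) tr_col_mx trmx0.
by rewrite mul_row_block !mul0mx !addr0 mul_row_col mulmx0 addr0.
Qed.

Lemma posdefmx_drsub p q (Y : 'M[R]_(p + q)) : posdefmx Y -> posdefmx (drsubmx Y).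
Proof.
case=> symY posY; split; first by case: (trmx_sym_blocks symY).
move=> v v_neq0; have w_neq0 : col_mx (0 : 'cV_p) v != 0.
  by apply: contra v_neq0 => /eqP; rewrite -col_mx0 => /eq_col_mx [_ ->].
have := posY _ w_neq0; rewrite -[in X in X -> _](submxK Y) tr_col_mx trmx0.
by rewrite mul_row_block !mul0mx !add0r mul_row_col mulmx0 add0r.
Qed.

Lemma posdefmx_schur p q (Y : 'M[R]_(p + q)) : posdefmx Y -> posdefmx (schur Y).
Proof.
move=> posY; have unitA := posdefmx_unit (posdefmx_ulsub posY).
rewrite -[schur Y](block_mxKdr (ulsubmx Y) 0 0) -ldl_conj_diag //; last by case: posY.
by apply/posdefmx_drsub/posdefmx_congr => //; exact: unilow_mx_unit.
Qed.

(* Induction on the size of Q: the LDL decomposition of Q splits off its first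
   pivot, a positive scalar, leaving the Schur complement. *)
Lemma mxtrace_posdef_ge0 m n (P : 'M[R]_m) (Q : 'M[R]_n) (N : 'M[R]_(m, n)) :
  posdefmx P -> posdefmx Q -> 0 <= \tr (P *m N *m Q *m N^T).
Proof.
move=> posP; elim: n Q N => [|n IHn] Q N posQ.
  by rewrite (thinmx0 N) mulmx0 !mul0mx mxtrace0.
pose Q' : 'M[R]_(1 + n) := Q; have posQ' : posdefmx Q' by [].
have unitA := posdefmx_unit (posdefmx_ulsub posQ').
have -> : P *m N *m Q *m N^T = P *m (N *m unilow_mx (ldl_mx Q')) *m
    block_mx (ulsubmx Q') 0 0 (schur Q') *m (N *m unilow_mx (ldl_mx Q'))^T.
  rewrite {1}[Q](ldl_decomposition posQ'.1) // /ldl_lift trmx_mul !mulmxA.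
  by rewrite -[_ *m block_mx _ _ _ _]mulmxA -[_ *m (unilow_mx _)^T]mulmxA.
rewrite -(hsubmxK (N *m _)) tr_row_mx -(mulmxA P) mul_row_block.
rewrite !mulmx0 !addr0 add0r -mulmxA mul_row_col mulmxDr mxtraceD !mulmxA.
apply: addr_ge0; last exact/IHn/posdefmx_schur.
rewrite [ulsubmx Q']mx11_scalar mul_mx_scalar -scalemxAl mxtraceZ.
apply: mulr_ge0.
  have e_neq0 : (1%:M : 'cV[R]_1) != 0.
    by apply/eqP => /matrixP /(_ 0 0); rewrite !mxE => /eqP; rewrite oner_eq0.
  by have := (posdefmx_ulsub posQ').2 _ e_neq0; rewrite trmx1 mul1mx mulmx1 => /ltW.
by rewrite mxtrace_mulC mulmxA trace_mx11; exact: posdefmx_psd.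
Qed.

Lemma mxtrace_posdef_pair_ge0 m n (P : 'M[R]_m) (Q : 'M[R]_n) (N : 'M[R]_(m, n)) :
  posdefmx P -> posdefmx Q -> 0 <= \tr (P *m N *m Q *m N^T) + \tr (Q *m N^T *m P *m N).
Proof.
move=> posP posQ; apply: addr_ge0; first exact: mxtrace_posdef_ge0.
by rewrite -[X in _ *m X](trmxK N); exact: mxtrace_posdef_ge0.
Qed.

End PositiveDefinite.
Section MatrixCurves.
Variable R : realType.

Lemma is_derive_scalel (V : normedModType R) (M : V) (x v : R) :
  is_derive x v (fun t : R => t *: M) (v *: M).
Proof. by apply: DeriveDef; [exact: diff_derivable | rewrite deriveE // diff_val]. Qed.

Lemma is_derive_line (V : normedModType R) (C M : V) (x v : R) :
  is_derive x v (fun t : R => C + t *: M) (v *: M).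
Proof.
have := is_deriveD (is_derive_cst C x v) (is_derive_scalel M x v).
by rewrite add0r.
Qed.

Lemma is_derive_mx m n (f : R -> 'M[R]_(m, n)) (x v : R) (D : 'M[R]_(m, n)) :
  (forall i j, is_derive x v (fun t => f t i j) (D i j)) -> is_derive x v f D.
Proof.
move=> dfD; have df : derivable f x v.
  by apply/derivable_mxP => i j; have [] := dfD i j.
apply: DeriveDef => //; rewrite derive_mx //; apply/matrixP => i j.
by rewrite mxE; have [_ ->] := dfD i j.
Qed.

Lemma is_derive_mx_coord m n (f : R -> 'M[R]_(m, n)) (x v : R) (D : 'M[R]_(m, n)) i j :
  is_derive x v f D -> is_derive x v (fun t => f t i j) (D i j).
Proof.
case=> df <-; apply: DeriveDef; first by move: df => /derivable_mxP; apply.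
by rewrite derive_mx // mxE.
Qed.

Lemma is_derive_mulmx m n k (f : R -> 'M[R]_(m, n)) (g : R -> 'M[R]_(n, k))
    (x v : R) (Df : 'M[R]_(m, n)) (Dg : 'M[R]_(n, k)) :
  is_derive x v f Df -> is_derive x v g Dg ->
  is_derive x v (fun t => f t *m g t) (Df *m g x + f x *m Dg).
Proof.
move=> dfD dgD; apply: is_derive_mx => i j.
have -> : (fun t => (f t *m g t) i j) = \sum_(l < n) ((fun t => f t i l) * (fun t => g t l j)).
  by apply/funext => t; rewrite mxE fct_sumE.
apply: is_derive_eq (is_derive_sum (fun l =>
  is_deriveM (is_derive_mx_coord i l dfD) (is_derive_mx_coord l j dgD))) _.
rewrite !mxE -big_split /=; apply: eq_bigr => l _.
by rewrite addrC /GRing.scale /= mulrC [g x l j * _]mulrC.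
Qed.

Lemma is_derive_invmx n (f : R -> 'M[R]_n) (x v : R) (Df : 'M[R]_n) :
  (\forall t \near x, f t \in unitmx) -> derivable (fun t => invmx (f t)) x v ->
  is_derive x v f Df ->
  is_derive x v (fun t => invmx (f t)) (- (invmx (f x) *m Df *m invmx (f x))).
Proof.
move=> unit_f dinv dfD; have ufx : f x \in unitmx := nbhs_singleton unit_f.
have dprod := is_derive_mulmx dfD (derivableP dinv).
have one_near : \forall t \near x, f t *m invmx (f t) = 1%:M.
  by near=> t; rewrite mulmxV //; near: t.
(* the product rule turns [f t *m invmx (f t) = 1] into a linear equation for
   the derivative of the inverse *)
have := near_eq_derive v one_near; rewrite derive_val derive_cst => prod0.
apply: DeriveDef => //; set D := 'D_v _ x in prod0 *.
rewrite -[D](mulKmx ufx) -[f x *m D](addKr (Df *m invmx (f x))) prod0 addr0.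
by rewrite mulmxN mulmxA.
Unshelve. all: by end_near.
Qed.

Section PolynomialMatrixCurve.
Variables (n : nat) (P : 'M[{poly R}]_n).

Lemma det_polymx_eval (t : R) : \det (map_mx (horner_eval t) P) = (\det P).[t].
Proof. by rewrite det_map_mx. Qed.

Lemma near_unitmx_polymx (x : R) : map_mx (horner_eval x) P \in unitmx ->
  \forall t \near x, map_mx (horner_eval t) P \in unitmx.
Proof.
rewrite unitmxE unitfE det_polymx_eval => det_x.
have det_near := cvgr_neq0 _ (@continuous_horner _ (\det P) x) det_x.
near=> t; rewrite unitmxE unitfE det_polymx_eval.
by near: t; exact: det_near.
Unshelve. all: by end_near.
Qed.

Lemma derivable_invmx_polymx (x : R) : map_mx (horner_eval x) P \in unitmx ->
  derivable (fun t : R => invmx (map_mx (horner_eval t) P)) x 1.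
Proof.
(* Cramer's rule: near x the entries of the inverse are rational functions. *)
move=> ux; have det_x : (\det P).[x] != 0 by rewrite -det_polymx_eval -unitfE -unitmxE.
pose G (t : R) : 'M[R]_n := \matrix_(i, j) (((\det P).[t])^-1 * (\adj P i j).[t]).
have eqG : {near x, G =1 (fun t : R => invmx (map_mx (horner_eval t) P))}.
  near=> t; have ut : map_mx (horner_eval t) P \in unitmx.
    by near: t; exact: near_unitmx_polymx.
  by rewrite /invmx ut -map_mx_adj det_polymx_eval; apply/matrixP => i j; rewrite !mxE.
apply: near_eq_derivable eqG _; apply/derivable_mxP => i j.
have -> : (fun t => G t i j) = (fun t => ((\det P).[t])^-1) * horner (\adj P i j).
  by apply/funext => t; rewrite mxE.
by case: (is_deriveM (is_deriveV det_x (is_derive_poly (\det P) x))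
                     (is_derive_poly (\adj P i j) x)).
Unshelve. all: by end_near.
Qed.

End PolynomialMatrixCurve.

Lemma is_derive_invmx_line n (A A1 : 'M[R]_n) : A \in unitmx ->
  is_derive (0 : R) 1 (fun t : R => invmx (A + t *: A1)) (- (invmx A *m A1 *m invmx A)).
Proof.
move=> uA; pose P := \matrix_(i, j) ((A i j)%:P + A1 i j *: 'X).
have evalP t : map_mx (horner_eval t) P = A + t *: A1.
  by apply/matrixP => i j; rewrite !mxE horner_evalE hornerD hornerC hornerZ hornerX mulrC.
have uP0 : map_mx (horner_eval 0) P \in unitmx by rewrite evalP scale0r addr0.
apply: is_derive_eq.
- apply: is_derive_invmx (is_derive_line A A1 0 1).
  + by apply: filterS (near_unitmx_polymx uP0) => t; rewrite evalP.
  + by have := derivable_invmx_polymx uP0; under eq_fun do rewrite evalP.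
- by rewrite scale1r (_ : A + 0 *: A1 = A) // scale0r addr0.
Qed.
End MatrixCurves.
Section WeilPetersson.
Variables (R : realType) (p q : nat).
Implicit Types (X Y V VX VY : 'M[R]_(p + q)).

Lemma is_derive_ulsub_line (M N : 'M[R]_(p + q)) :
  is_derive (0 : R) 1 (fun t : R => ulsubmx (M + t *: N)) (ulsubmx N).
Proof.
have -> : (fun t : R => ulsubmx (M + t *: N)) = (fun t => ulsubmx M + t *: ulsubmx N).
  by apply/funext => t; rewrite ulsubmx_line.
exact: is_derive_eq (is_derive_line _ _ _ _) (scale1r _).
Qed.

Lemma is_derive_schur_line Y V : symmx Y -> symmx V -> ulsubmx Y \in unitmx ->
  is_derive (0 : R) 1 (fun t : R => schur (Y + t *: V)) (drsubmx (ldl_conj Y V)).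
Proof.
move=> symY symV unitA; have [_ _ dlV] := trmx_sym_blocks symV.
have -> : (fun t : R => schur (Y + t *: V)) = (fun t => drsubmx Y + t *: drsubmx V) -
   (fun t => ((ursubmx Y)^T + t *: (ursubmx V)^T) *m invmx (ulsubmx Y + t *: ulsubmx V)
      *m (ursubmx Y + t *: ursubmx V)).
  apply/funext => t; rewrite /schur ulsubmx_line ursubmx_line drsubmx_line.
  by rewrite [(_ + _)^T]linearD /= [(t *: _)^T]linearZ.
apply: is_derive_eq.
  apply: is_deriveB; first exact: is_derive_line.
  apply: is_derive_mulmx; last exact: is_derive_line.
  apply: is_derive_mulmx; first exact: is_derive_line.
  exact: is_derive_invmx_line.
rewrite ldl_conj_dr trmx_ldl_mx // /ldl_mx dlV !scale1r !scale0r !addr0.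
rewrite mulmxN mulmxDl mulNmx !mulmxA !opprD opprK !addrA.
by rewrite [LHS](ACl (1*2*4*3)).
Qed.

Lemma dpi_XE X Y VX VY : dpi_X X Y VX VY = ulsubmx VX.
Proof. by rewrite /dpi_X derive1E; case: (is_derive_ulsub_line X VX). Qed.

Lemma dpi_YE X Y VX VY : dpi_Y X Y VX VY = ulsubmx VY.
Proof. by rewrite /dpi_Y derive1E; case: (is_derive_ulsub_line Y VY). Qed.

Section PositiveDefiniteBase.
Variable Y : 'M[R]_(p + q).
Hypothesis posY : posdefmx Y.

Let symY : Y^T = Y := posY.1.
Let posAi := posdefmx_inv (posdefmx_ulsub posY).
Let posSi := posdefmx_inv (posdefmx_schur posY).
Let unitA := posdefmx_unit (posdefmx_ulsub posY).
Let unitS := posdefmx_unit (posdefmx_schur posY).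

Lemma dpi_TE X VX VY : symmx VY -> dpi_T X Y VX VY = drsubmx (ldl_conj Y VY).
Proof.
move=> symVY; rewrite /dpi_T derive1E.
by case: (is_derive_schur_line symY symVY unitA).
Qed.

Lemma dpi_derivable_posdef X VX VY : symmx VY -> dpi_derivable X Y VX VY.
Proof.
move=> symVY; split.
- by case: (is_derive_ulsub_line X VX).
- by case: (is_derive_ulsub_line Y VY).
- by case: (is_derive_schur_line symY symVY unitA).
Qed.

Lemma dpi_surjective X (WX WY : 'M[R]_p) (WT : 'M[R]_q) :
  symmx WX -> symmx WY -> symmx WT ->
  exists VX VY, [/\ symmx VX, symmx VY, dpi_X X Y VX VY = WX,
                    dpi_Y X Y VX VY = WY & dpi_T X Y VX VY = WT].
Proof.
move=> symWX symWY symWT.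
have symVY : symmx (ldl_lift Y (block_mx WY 0 0 WT)).
  by apply: ldl_lift_sym; rewrite tr_block_mx !trmx0 symWY symWT.
exists (block_mx WX 0 0 0), (ldl_lift Y (block_mx WY 0 0 WT)); split => //.
- by rewrite /symmx tr_block_mx !trmx0 symWX.
- by rewrite dpi_XE block_mxKul.
- by rewrite dpi_YE ldl_lift_ul block_mxKul.
- by rewrite dpi_TE // ldl_liftK block_mxKdr.
Qed.

Lemma wp_inner_split X VX VY : symmx VY ->
  wp_inner Y VX VY VX VY =
  dpi_sqnorm X Y VX VY + wp_inner Y VX VY (vert_X Y VX) (vert_Y Y VY).
Proof.
move=> symVY; rewrite /dpi_sqnorm dpi_XE dpi_YE dpi_TE // /wp_inner /trwp_inner.
change (pi2 Y) with (schur Y).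
rewrite -!/(tr_form Y _ _) (tr_form_vert_X symY) // (tr_form_vert_Y symY) //.
rewrite -!mulrDr !addrA; congr (_ * _).
by rewrite [LHS](ACl (1*3*4*2*5)).
Qed.

Lemma tr_form_vert_X_ge0 V : symmx V -> 0 <= tr_form Y V (vert_X Y V).
Proof.
move=> /(ldl_conj_sym Y) /trmx_sym_blocks [_ symD dlV].
rewrite tr_form_blocks // /vert_X ldl_liftK.
rewrite block_mxKul block_mxKur block_mxKdl block_mxKdr mulmx0 mxtrace0 add0r dlV.
apply: addr_ge0; first exact: mxtrace_posdef_pair_ge0.
by rewrite -[X in _ *m X]symD; exact: mxtrace_posdef_ge0.
Qed.

Lemma tr_form_vert_Y_ge0 V : symmx V -> 0 <= tr_form Y V (vert_Y Y V).
Proof.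
move=> /(ldl_conj_sym Y) /trmx_sym_blocks [_ _ dlV].
rewrite tr_form_blocks // /vert_Y ldl_liftK.
rewrite block_mxKul block_mxKur block_mxKdl block_mxKdr !mulmx0 !mxtrace0 add0r addr0.
by rewrite dlV; exact: mxtrace_posdef_pair_ge0.
Qed.

Lemma wp_inner_vert_ge0 VX VY : symmx VX -> symmx VY ->
  0 <= wp_inner Y VX VY (vert_X Y VX) (vert_Y Y VY).
Proof.
move=> symVX symVY; rewrite mulr_ge0 ?invr_ge0 ?ler0n //.
by rewrite addr_ge0 ?tr_form_vert_X_ge0 ?tr_form_vert_Y_ge0.
Qed.

End PositiveDefiniteBase.
End WeilPetersson.

Unset Implicit Arguments.

Theorem lemma3p11 (R : realType) (g' g'' : nat) :
  (0 < g'')%N ->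
  forall X Y : 'M[R]_(g' + g''), siegel X Y ->
  pi_riemannian_submersion_at X Y.
Proof.
(* The argument also covers g'' = 0. *)
move=> _ X Y [_ posY]; split.
- by move=> VX VY _; exact: dpi_derivable_posdef.
- by move=> WX WY WT; exact: dpi_surjective.
- move=> VX VY symVX symVY horizontal.
  rewrite (wp_inner_split posY X) // horizontal ?addr0 //.
  + exact: vert_X_sym.
  + exact: vert_Y_sym.
  + by rewrite dpi_XE vert_X_ul.
  + by rewrite dpi_YE vert_Y_ul.
  + by rewrite dpi_TE ?vert_Y_dr //; exact: vert_Y_sym.
- move=> VX VY symVX symVY.
  by rewrite (wp_inner_split posY X) // lerDl wp_inner_vert_ge0.
Qed.
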